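(* Let $\varphi$ be a rational self-map of $\mathbb{D}$ having order of contact $n$ (even) with $\partial\mathbb{D}$ at $\zeta$, let $\lambda=\varphi(\zeta)$, and let $\sigma$ be a branch of $\varphi_e^{-1}$ defined on a neighborhood of $\lambda$ with $\sigma(\lambda)=\zeta$. Then $\sigma$ has order of contact $n$ with $\partial\mathbb{D}$ at $\lambda$.
   Context: $\varphi_e=\rho\circ\varphi\circ\rho$ with $\rho(z)=1/\bar z$; since $\varphi_e$ maps $\{|z|>1\}$ into itself, $\varphi_e^{-1}(\mathbb{D})\subset\mathbb{D}$, so $\sigma$ maps points of $\mathbb{D}$ near $\lambda$ into $\mathbb{D}$. Order of contact $c$ of a map $\varphi$ (analytic on $V\cap\mathbb{D}$ for a neighborhood $V$ of $\zeta$, with values in $\mathbb{D}$) at $\zeta$: $\lim_{z\to\zeta}\varphi(z)=\varphi(\zeta)\in\partial\mathbb{D}$ exists and $\frac{1-|\varphi(e^{i\theta})|^2}{|\varphi(\zeta)-\varphi(e^{i\theta})|^c}$ is essentially bounded above and away from zero as $e^{i\theta}\to\zeta$. *)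

From Stdlib Require Import Reals Lra List.
Open Scope R_scope.

Definition Cx := (R * R)%type.

Definition Cadd (z w : Cx) : Cx := (fst z + fst w, snd z + snd w).
Definition Copp (z : Cx) : Cx := (- fst z, - snd z).
Definition Csub (z w : Cx) : Cx := Cadd z (Copp w).
Definition Cmul (z w : Cx) : Cx :=
  (fst z * fst w - snd z * snd w, fst z * snd w + snd z * fst w).
Definition Cnorm2 (z : Cx) : R := fst z * fst z + snd z * snd z.
Definition Cinv (z : Cx) : Cx := (fst z / Cnorm2 z, - snd z / Cnorm2 z).
Definition Cdiv (z w : Cx) : Cx := Cmul z (Cinv w).
Definition Cconj (z : Cx) : Cx := (fst z, - snd z).
Definition Cabs (z : Cx) : R := sqrt (Cnorm2 z).
Definition C0 : Cx := (0, 0).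

(* Horner evaluation of a polynomial given by its coefficient list
   [a_0; a_1; ...; a_d] (constant term first). *)
Fixpoint peval (p : list Cx) (z : Cx) : Cx :=
  match p with
  | nil => C0
  | a :: p' => Cadd a (Cmul z (peval p' z))
  end.

Definition holo_at (f : Cx -> Cx) (z : Cx) : Prop :=
  exists l : Cx, forall eps, 0 < eps -> exists del, 0 < del /\
    forall h : Cx, 0 < Cabs h < del ->
      Cabs (Csub (Cdiv (Csub (f (Cadd z h)) (f z)) h) l) < eps.

(* phi is a rational self-map of the unit disc D: phi = p/q with q having no
   zero on the closed disc (true for the reduced form of any rational map that
   is bounded on D), and phi maps D into D. *)
Definition RationalSelfMap (phi : Cx -> Cx) : Prop :=
  exists p q : list Cx,
    (forall z, Cabs z <= 1 -> peval q z <> C0) /\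
    (forall z, peval q z <> C0 -> phi z = Cdiv (peval p z) (peval q z)) /\
    (forall z, Cabs z < 1 -> Cabs (phi z) < 1).

Definition rho (z : Cx) : Cx := Cinv (Cconj z).
Definition phi_e (phi : Cx -> Cx) (z : Cx) : Cx := rho (phi (rho z)).

Definition OrderOfContact (f : Cx -> Cx) (zeta : Cx) (c : R) : Prop :=
  Cabs zeta = 1 /\
  (exists r, 0 < r /\ forall z, Cabs (Csub z zeta) < r -> Cabs z < 1 ->
      holo_at f z /\ Cabs (f z) < 1) /\
  (forall eps, 0 < eps -> exists del, 0 < del /\ forall z,
      Cabs z < 1 -> Cabs (Csub z zeta) < del -> Cabs (Csub (f z) (f zeta)) < eps) /\
  Cabs (f zeta) = 1 /\
  (exists del m M, 0 < del /\ 0 < m /\ 0 < M /\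
     forall w, Cabs w = 1 -> 0 < Cabs (Csub w zeta) < del ->
       f w <> f zeta /\
       m <= (1 - Cabs (f w) ^ 2) / Rpower (Cabs (Csub (f zeta) (f w))) c <= M).

Definition BranchOfInverse (g sigma : Cx -> Cx) (lam zeta : Cx) : Prop :=
  sigma lam = zeta /\
  exists r, 0 < r /\ forall w, Cabs (Csub w lam) < r ->
    holo_at sigma w /\ g (sigma w) = w.

From Pilot Require Import Defs.
From Stdlib Require Import Reals List Lra Lia FunctionalExtensionality.
From Coquelicot Require Import Rcomplements Complex.
Open Scope R_scope.

(* Near [zeta] the rational map [phi] is strictly differentiable, with derivative
   [D]; the branch [sigma] of the inverse of [phi_e] forces [D <> 0], and since
   [phi] maps the disc into itself and the circle near [zeta] into the disc,
   [k = conj (phi zeta) D zeta] has positive real part.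

   Let [w] be on the circle near [phi zeta] and [u = sigma w].  A reflection
   argument puts [u] inside the disc, and [phi (rho u) = w].  Write [u = a v] with
   [|v| = 1]: then [rho u] lies on the same ray at distance [t = 1/a - 1] beyond [v],
   so [1 - |phi v|^2] is about [2 t Re k], while by the contact condition at [v] it
   is comparable to [|phi zeta - phi v|^n], i.e. to [|v - zeta|^n].  Hence
   [1 - |u|^2] is comparable to [|v - zeta|^n]; as [n] is even and cannot be [0],
   [n >= 2], so [t = o(|v - zeta|)] and [|zeta - u|] is comparable to [|v - zeta|]. *)

(** * Complex arithmetic and the reflection [rho] *)

Lemma Cabs_eq : Cabs = Cmod.
Proof.
  apply functional_extensionality; intros [a b].
  unfold Cabs, Cnorm2, Cmod; simpl; f_equal; ring.
Qed.
Lemma Csub_eq : Csub = Cminus.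
Proof. reflexivity. Qed.
Lemma Cadd_eq : Cadd = Cplus.
Proof. reflexivity. Qed.
Lemma Cinv_eq : Defs.Cinv = Complex.Cinv.
Proof.
  apply functional_extensionality; intros [a b].
  unfold Defs.Cinv, Complex.Cinv, Cnorm2; simpl; rewrite !Rmult_1_r; reflexivity.
Qed.
Lemma Cdiv_eq : Defs.Cdiv = Complex.Cdiv.
Proof. unfold Defs.Cdiv, Complex.Cdiv; rewrite Cinv_eq; reflexivity. Qed.

Lemma Cmod_sub_sym a b : Cmod (a - b) = Cmod (b - a).
Proof. replace (b - a)%C with (- (a - b))%C by ring. now rewrite Cmod_opp. Qed.
Lemma Cmod_sub_self z : Cmod (z - z) = 0.
Proof. replace (z - z)%C with (RtoC 0) by ring. apply Cmod_0. Qed.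
Lemma Cmod_sub_triangle a b c : Cmod (a - c) <= Cmod (a - b) + Cmod (b - c).
Proof. replace (a - c)%C with ((a - b) + (b - c))%C by ring. apply Cmod_triangle. Qed.
Lemma Cmod_reverse_triangle a b : Cmod a - Cmod b <= Cmod (a - b).
Proof.
  pose proof (Cmod_triangle (a - b) b) as T. replace (a - b + b)%C with a in T by ring. lra.
Qed.
Lemma Re_Cmod_bounds z : - Cmod z <= Re z <= Cmod z.
Proof.
  pose proof (re_le_Cmod z). pose proof (Rle_abs (Re z)). pose proof (Rle_abs (- Re z)).
  rewrite Rabs_Ropp in *. lra.
Qed.
Lemma Cmod_sq_add u x :
  Cmod (u + x) ^ 2 = Cmod u ^ 2 + 2 * Re (Cconj u * x) + Cmod x ^ 2.
Proof. rewrite !Cmod2_alt. destruct u as [a b], x as [c d]. simpl. ring. Qed.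
Lemma Cmod_RtoC r : 0 <= r -> Cmod (RtoC r) = r.
Proof. intros. rewrite Cmod_R. now apply Rabs_right, Rle_ge. Qed.
Lemma Cmod_scal_unit (r : R) z : 0 <= r -> Cmod z = 1 -> Cmod (RtoC r * z) = r.
Proof. intros Hr Hz. rewrite Cmod_mult, Hz, Cmod_RtoC by exact Hr. ring. Qed.
Lemma Cmod_pos_neq0 z : 0 < Cmod z -> z <> RtoC 0.
Proof. apply Cmod_gt_0. Qed.

Lemma Cconj_neq0 z : z <> RtoC 0 -> Cconj z <> RtoC 0.
Proof.
  intros H E. apply H. rewrite <- (Cconj_conj z), E. apply injective_projections; simpl; lra.
Qed.
Lemma rho_C (z : C) : rho z = (/ Cconj z)%C :> C.
Proof. unfold rho. now rewrite Cinv_eq. Qed.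
Lemma rho_0 : rho (RtoC 0) = RtoC 0.
Proof. rewrite rho_C. apply injective_projections; simpl; unfold Rdiv; ring. Qed.
Lemma rho_involutive (z : C) : rho (rho z) = z :> C.
Proof.
  destruct (Ceq_dec z (RtoC 0)) as [->|H].
  - now rewrite !rho_0.
  - rewrite !rho_C, Cinv_conj by now apply Cconj_neq0. rewrite Cconj_conj. field; auto.
Qed.
Lemma Cmod_rho (z : C) : Cmod (rho z) = / Cmod z.
Proof.
  destruct (Ceq_dec z (RtoC 0)) as [->|H].
  - now rewrite rho_0, Cmod_0, Rinv_0.
  - rewrite rho_C, Cmod_inv by now apply Cconj_neq0. now rewrite Cmod_conj.
Qed.
Lemma rho_dist (x y : C) : x <> RtoC 0 -> y <> RtoC 0 ->
  Cmod (rho x - rho y) = Cmod (x - y) / (Cmod x * Cmod y).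
Proof.
  intros Hx Hy. pose proof (Cconj_neq0 _ Hx). pose proof (Cconj_neq0 _ Hy).
  rewrite !rho_C.
  replace (/ Cconj x - / Cconj y)%C with (Cconj (y - x) / (Cconj x * Cconj y))%C
    by (rewrite Cminus_conj; field; auto).
  rewrite Cmod_div by now apply Cmult_neq_0.
  now rewrite Cmod_mult, !Cmod_conj, Cmod_sub_sym.
Qed.
Lemma rho_unit (z : C) : Cmod z = 1 -> rho z = z :> C.
Proof.
  intros H. assert (H1 : fst z * fst z + snd z * snd z = 1).
  { pose proof (Cmod2_alt z) as E. rewrite H in E. unfold Re, Im in E. nra. }
  rewrite rho_C. destruct z as [a b]. simpl in H1. unfold Cinv, Cconj; simpl.
  replace (a * (a * 1) + - b * (- b * 1)) with 1 by lra.
  apply injective_projections; simpl; field.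
Qed.
Lemma rho_polar (u : C) : u <> RtoC 0 -> rho u = (RtoC (/ (Cmod u ^ 2)) * u)%C :> C.
Proof.
  intros H. pose proof (Cmod_gt_0 u) as [Hp _]. specialize (Hp H).
  rewrite rho_C, Cmod2_alt. destruct u as [a b]; simpl in *.
  assert (a * a + b * b <> 0). { intro E. apply H. apply injective_projections; simpl; nra. }
  unfold Cinv, Cconj; simpl. apply injective_projections; simpl; field; auto.
Qed.

(** * Strict differentiability of rational maps *)

Definition cont2_at (F : C -> C -> C) (z : C) : Prop :=
  forall eps, 0 < eps -> exists del, 0 < del /\ forall a b,
    Cmod (a - z) < del -> Cmod (b - z) < del -> Cmod (F a b - F z z) < eps.

Definition is_strict_derive (f : C -> C) (z D : C) : Prop :=
  forall eps, 0 < eps -> exists del, 0 < del /\ forall a b,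
    Cmod (a - z) < del -> Cmod (b - z) < del ->
    Cmod (f a - f b - D * (a - b)) <= eps * Cmod (a - b).

Lemma cont2_const c z : cont2_at (fun _ _ => c) z.
Proof.
  intros eps He. exists 1. split; [lra|]. intros.
  rewrite Cmod_sub_self. lra.
Qed.
Lemma cont2_fst z : cont2_at (fun a _ => a) z.
Proof. intros eps He. exists eps. auto. Qed.
Lemma cont2_snd z : cont2_at (fun _ b => b) z.
Proof. intros eps He. exists eps. auto. Qed.

Lemma cont2_plus F G z :
  cont2_at F z -> cont2_at G z -> cont2_at (fun a b => F a b + G a b)%C z.
Proof.
  intros HF HG eps He.
  destruct (HF (eps/2)) as [d1 [Hd1 H1]]; [lra|].
  destruct (HG (eps/2)) as [d2 [Hd2 H2]]; [lra|].
  exists (Rmin d1 d2). split; [now apply Rmin_pos|]. intros a b Ha Hb.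
  pose proof (Rmin_l d1 d2). pose proof (Rmin_r d1 d2).
  specialize (H1 a b ltac:(lra) ltac:(lra)). specialize (H2 a b ltac:(lra) ltac:(lra)).
  replace (F a b + G a b - (F z z + G z z))%C
    with ((F a b - F z z) + (G a b - G z z))%C by ring.
  pose proof (Cmod_triangle (F a b - F z z) (G a b - G z z)). lra.
Qed.

Lemma cont2_opp F z : cont2_at F z -> cont2_at (fun a b => - F a b)%C z.
Proof.
  intros HF eps He. destruct (HF eps He) as [d [Hd H]]. exists d; split; auto.
  intros a b Ha Hb. replace (- F a b - - F z z)%C with (- (F a b - F z z))%C by ring.
  rewrite Cmod_opp. auto.
Qed.

Lemma cont2_mult F G z :
  cont2_at F z -> cont2_at G z -> cont2_at (fun a b => F a b * G a b)%C z.
Proof.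
  intros HF HG eps He. set (A := Cmod (F z z)). set (B := Cmod (G z z)).
  assert (0 <= A) by apply Cmod_ge_0. assert (0 <= B) by apply Cmod_ge_0.
  destruct (HF (eps / (2 * (B + 1)))) as [d1 [Hd1 H1]].
  { apply Rdiv_lt_0_compat; lra. }
  destruct (HG (Rmin 1 (eps / (2 * (A + 1))))) as [d2 [Hd2 H2]].
  { apply Rmin_pos; [lra|]. apply Rdiv_lt_0_compat; lra. }
  exists (Rmin d1 d2). split; [now apply Rmin_pos|]. intros a b Ha Hb.
  pose proof (Rmin_l d1 d2). pose proof (Rmin_r d1 d2).
  specialize (H1 a b ltac:(lra) ltac:(lra)). specialize (H2 a b ltac:(lra) ltac:(lra)).
  pose proof (Rmin_l 1 (eps / (2 * (A + 1)))). pose proof (Rmin_r 1 (eps / (2 * (A + 1)))).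
  replace (F a b * G a b - F z z * G z z)%C
    with ((F a b - F z z) * G a b + F z z * (G a b - G z z))%C by ring.
  eapply Rle_lt_trans; [apply Cmod_triangle|]. rewrite !Cmod_mult. fold A.
  assert (Cmod (G a b) <= B + 1).
  { pose proof (Cmod_reverse_triangle (G a b) (G z z)) as HR. fold B in HR. lra. }
  assert (Cmod (F a b - F z z) * Cmod (G a b) <= eps / (2 * (B + 1)) * (B + 1))
    by (apply Rmult_le_compat; try apply Cmod_ge_0; lra).
  assert (A * Cmod (G a b - G z z) <= A * (eps / (2 * (A + 1))))
    by (apply Rmult_le_compat_l; lra).
  replace (eps / (2 * (B + 1)) * (B + 1)) with (eps / 2) in * by (field; lra).
  replace (A * (eps / (2 * (A + 1)))) with (eps / 2 - eps / (2 * (A + 1))) in * by (field; lra).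
  assert (0 < eps / (2 * (A + 1))) by (apply Rdiv_lt_0_compat; lra).
  lra.
Qed.

Lemma cont2_inv F z :
  cont2_at F z -> F z z <> RtoC 0 -> cont2_at (fun a b => / F a b)%C z.
Proof.
  intros HF Hn eps He. set (A := Cmod (F z z)).
  assert (HA : 0 < A) by now apply Cmod_gt_0.
  destruct (HF (Rmin (A / 2) (eps * A * A / 2))) as [d [Hd H1]].
  { apply Rmin_pos; [lra|]. apply Rdiv_lt_0_compat; [|lra].
    repeat apply Rmult_lt_0_compat; lra. }
  exists d; split; auto. intros a b Ha Hb. specialize (H1 a b Ha Hb).
  pose proof (Rmin_l (A / 2) (eps * A * A / 2)). pose proof (Rmin_r (A / 2) (eps * A * A / 2)).
  assert (HFa : A / 2 < Cmod (F a b)).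
  { pose proof (Cmod_reverse_triangle (F z z) (F a b)) as HR.
    rewrite Cmod_sub_sym in H1. fold A in HR. lra. }
  assert (Hab : F a b <> RtoC 0) by (apply Cmod_pos_neq0; lra).
  replace (/ F a b - / F z z)%C with ((F z z - F a b) / (F a b * F z z))%C by (field; auto).
  rewrite Cmod_div, Cmod_mult, Cmod_sub_sym by now apply Cmult_neq_0. fold A.
  apply Rlt_div_l; [apply Rmult_lt_0_compat; lra|].
  assert (eps * (A / 2) * A <= eps * Cmod (F a b) * A).
  { apply Rmult_le_compat_r; [lra|]. apply Rmult_le_compat_l; lra. }
  nra.
Qed.

Lemma cont2_peval p G z :
  cont2_at G z -> cont2_at (fun a b => peval p (G a b)) z.
Proof.
  intros HG. induction p as [|c p IH]; simpl.
  - apply cont2_const.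
  - apply (cont2_plus (fun _ _ => c) (fun a b => G a b * peval p (G a b))%C).
    + apply cont2_const.
    + now apply cont2_mult.
Qed.

Fixpoint peval_dq (p : list C) (a b : C) : C :=
  match p with
  | nil => RtoC 0
  | c :: p' => (peval p' a + b * peval_dq p' a b)%C
  end.

Lemma peval_dq_spec p a b : (peval p a - peval p b)%C = ((a - b) * peval_dq p a b)%C.
Proof.
  induction p as [|c p IH]; simpl.
  - change C0 with (RtoC 0). ring.
  - change (Cadd c (Cmul a (peval p a))) with (c + a * peval p a)%C.
    change (Cadd c (Cmul b (peval p b))) with (c + b * peval p b)%C.
    replace (c + a * peval p a - (c + b * peval p b))%C
      with ((a - b) * peval p a + b * (peval p a - peval p b))%C by ring.
    rewrite IH. ring.
Qed.

Lemma cont2_peval_dq p z : cont2_at (peval_dq p) z.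
Proof.
  induction p as [|c p IH]; simpl.
  - apply cont2_const.
  - apply (cont2_plus (fun a _ => peval p a) (fun a b => b * peval_dq p a b)%C).
    + apply (cont2_peval p (fun a _ => a)), cont2_fst.
    + apply (cont2_mult (fun _ b => b)); [apply cont2_snd | exact IH].
Qed.

Lemma strict_derive_of_dq f F z r : 0 < r -> cont2_at F z ->
  (forall a b, Cmod (a - z) < r -> Cmod (b - z) < r -> (f a - f b)%C = ((a - b) * F a b)%C) ->
  is_strict_derive f z (F z z).
Proof.
  intros Hr HF Hf eps He. destruct (HF eps He) as [d [Hd H]].
  exists (Rmin d r). split; [now apply Rmin_pos|]. intros a b Ha Hb.
  pose proof (Rmin_l d r). pose proof (Rmin_r d r).
  rewrite Hf by lra.
  replace ((a - b) * F a b - F z z * (a - b))%C with ((a - b) * (F a b - F z z))%C by ring.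
  rewrite Cmod_mult, Rmult_comm. apply Rmult_le_compat_r; [apply Cmod_ge_0|].
  left. apply H; lra.
Qed.

Lemma rational_strict_derive (p q : list C) (phi : C -> C) z :
  peval q z <> RtoC 0 ->
  (forall w, peval q w <> RtoC 0 -> phi w = (peval p w / peval q w)%C) ->
  exists D, is_strict_derive phi z D.
Proof.
  intros Hqz Hphi.
  set (F := fun a b =>
    ((peval_dq p a b * peval q b - peval p b * peval_dq q a b) / (peval q a * peval q b))%C).
  assert (Hq := cont2_peval q (fun a _ => a) z (cont2_fst z)).
  destruct (Hq (Cmod (peval q z))) as [r [Hr Hqr]]; [now apply Cmod_gt_0|].
  assert (Hq0 : forall x, Cmod (x - z) < r -> peval q x <> RtoC 0).
  { intros x Hx E. specialize (Hqr x x Hx Hx). simpl in Hqr.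
    rewrite E in Hqr. replace (RtoC 0 - peval q z)%C with (- peval q z)%C in Hqr by ring.
    rewrite Cmod_opp in Hqr. lra. }
  exists (F z z). apply (strict_derive_of_dq _ _ _ r Hr).
  - unfold F. apply cont2_mult.
    + apply cont2_plus; [apply cont2_mult|apply cont2_opp, cont2_mult].
      * apply cont2_peval_dq.
      * apply (cont2_peval q (fun _ b => b)), cont2_snd.
      * apply (cont2_peval p (fun _ b => b)), cont2_snd.
      * apply cont2_peval_dq.
    + apply cont2_inv; [apply cont2_mult|now apply Cmult_neq_0].
      * apply (cont2_peval q (fun a _ => a)), cont2_fst.
      * apply (cont2_peval q (fun _ b => b)), cont2_snd.
  - intros a b Ha Hb. pose proof (Hq0 a Ha). pose proof (Hq0 b Hb).
    rewrite (Hphi a), (Hphi b) by assumption. unfold F.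
    replace ((a - b) * ((peval_dq p a b * peval q b - peval p b * peval_dq q a b)
              / (peval q a * peval q b)))%C
      with (((a - b) * peval_dq p a b * peval q b - peval p b * ((a - b) * peval_dq q a b))
              / (peval q a * peval q b))%C by (field; auto).
    rewrite <- !peval_dq_spec. field. auto.
Qed.

Lemma ex_pos_le a b : 0 < a -> 0 < b -> exists c, 0 < c /\ c <= a /\ c <= b.
Proof.
  intros. exists (Rmin a b). split; [now apply Rmin_pos|]. split; [apply Rmin_l|apply Rmin_r].
Qed.

Lemma holo_at_lipschitz (f : C -> C) z : holo_at f z -> exists L d, 0 < L /\ 0 < d /\
  forall w, Cmod (w - z) < d -> Cmod (f w - f z) <= L * Cmod (w - z).
Proof.
  intros [l Hl]. rewrite Cabs_eq, Csub_eq, Cdiv_eq, Cadd_eq in Hl.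
  destruct (Hl 1 ltac:(lra)) as [d [Hd H]].
  exists (Cmod l + 1), d. pose proof (Cmod_ge_0 l). split; [lra|]. split; [exact Hd|].
  intros w Hw. destruct (Ceq_dec w z) as [->|Hne].
  - rewrite !Cmod_sub_self. lra.
  - assert (Hh : (w - z)%C <> RtoC 0).
    { intro E. apply Hne. replace w with ((w - z) + z)%C by ring. rewrite E. ring. }
    pose proof (proj1 (Cmod_gt_0 _) Hh). specialize (H (w - z)%C ltac:(lra)).
    replace (z + (w - z))%C with w in H by ring.
    replace (f w - f z)%C with (((f w - f z) / (w - z) - l) * (w - z) + l * (w - z))%C
      by (field; auto).
    eapply Rle_trans; [apply Cmod_triangle|]. rewrite !Cmod_mult. nra.
Qed.

(* Rational parametrisation of the unit circle, with [circle_point 0 = 1]. *)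
Definition circle_point (s : R) : C := ((1 - s * s) / (1 + s * s), 2 * s / (1 + s * s)).

Lemma circle_point_sub1 s :
  (circle_point s - 1)%C = (- 2 * (s * s) / (1 + s * s), 2 * s / (1 + s * s)).
Proof.
  assert (0 < 1 + s * s) by nra. unfold circle_point.
  apply injective_projections; simpl; field; lra.
Qed.

Lemma Im_circle_point_sub1 s : Im (circle_point s - 1) = 2 * s / (1 + s * s).
Proof. now rewrite circle_point_sub1. Qed.

Lemma circle_point_near (zeta : C) s : Cmod zeta = 1 -> s <> 0 ->
  Cmod (zeta * circle_point s) = 1 /\
  0 < Cmod (zeta * circle_point s - zeta) <= 2 * Rabs s.
Proof.
  intros Hz Hs. assert (Hp : 0 < 1 + s * s) by nra.
  assert (Hunit : Cmod (circle_point s) ^ 2 = 1).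
  { rewrite Cmod2_alt. unfold circle_point; simpl. field. lra. }
  assert (Hdist : Cmod (circle_point s - 1) ^ 2 = 4 * (s * s) / (1 + s * s)).
  { rewrite circle_point_sub1, Cmod2_alt. simpl. field. lra. }
  replace (zeta * circle_point s - zeta)%C with (zeta * (circle_point s - 1))%C by ring.
  rewrite !Cmod_mult, Hz, !Rmult_1_l.
  pose proof (Cmod_ge_0 (circle_point s)). pose proof (Cmod_ge_0 (circle_point s - 1)).
  split; [nra|split].
  - assert (0 < 4 * (s * s) / (1 + s * s)) by (apply Rdiv_lt_0_compat; nra). nra.
  - assert (Hb : 4 * (s * s) / (1 + s * s) <= (2 * Rabs s) ^ 2).
    { replace ((2 * Rabs s) ^ 2) with (4 * Rabs s ^ 2) by ring. rewrite pow2_abs.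
      apply Rle_div_l; nra. }
    pose proof (Rabs_pos s). nra.
Qed.

Lemma Cmod_sq_unit_add_lower lam X e : Cmod lam = 1 ->
  1 + 2 * Re (Cconj lam * X) - 2 * Cmod e <= Cmod (lam + X + e) ^ 2.
Proof.
  intros Hl. replace (lam + X + e)%C with (lam + (X + e))%C by ring.
  rewrite Cmod_sq_add, Hl.
  replace (Cconj lam * (X + e))%C with (Cconj lam * X + Cconj lam * e)%C by ring.
  rewrite re_plus. pose proof (Re_Cmod_bounds (Cconj lam * e)) as HR.
  rewrite Cmod_mult, Cmod_conj, Hl in HR. pose proof (pow2_ge_0 (Cmod (X + e))). lra.
Qed.

Lemma Cmod_perturb x e : Cmod e <= Cmod x / 2 ->
  Cmod x / 2 <= Cmod (x + e) <= 2 * Cmod x.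
Proof.
  intros He. pose proof (Cmod_triangle x e).
  pose proof (Cmod_reverse_triangle x (- e)) as HR. rewrite Cmod_opp in HR.
  replace (x - - e)%C with (x + e)%C in HR by ring.
  pose proof (Cmod_ge_0 x). lra.
Qed.

Lemma one_sub_sq_bounds a t : 1 / 2 <= a < 1 -> t = / a - 1 -> t / 2 <= 1 - a ^ 2 <= 2 * t.
Proof.
  intros Ha Ht. assert (Hta : t * a = 1 - a) by (subst; field; lra).
  assert (0 <= (1 - a) * (a * (1 + a) - 1 / 2)) by (apply Rmult_le_pos; nra).
  assert (0 <= (1 - a) * (2 - a * (1 + a))) by (apply Rmult_le_pos; nra).
  split; apply Rmult_le_reg_r with a; nra.
Qed.

Lemma ratio_of_scales (n : nat) a t d B c1 c2 : 0 <= c1 ->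
  1 / 2 <= a < 1 -> t = / a - 1 -> 0 < d -> d / 2 <= B <= 3 * d / 2 ->
  c1 * d ^ n <= t <= c2 * d ^ n ->
  c1 / (2 * (3 / 2) ^ n) <= (1 - a ^ 2) / B ^ n <= 2 * c2 * 2 ^ n.
Proof.
  intros Hc1 Ha Ht Hd HB [Hlo Hhi]. pose proof (one_sub_sq_bounds a t Ha Ht) as [HA1 HA2].
  assert (HBn : (1 / 2) ^ n * d ^ n <= B ^ n <= (3 / 2) ^ n * d ^ n).
  { rewrite <- !Rpow_mult_distr. split; apply pow_incr; lra. }
  assert (0 < (1 / 2) ^ n) by (apply pow_lt; lra).
  assert (0 < (3 / 2) ^ n) by (apply pow_lt; lra).
  assert (0 < d ^ n) by (apply pow_lt; lra).
  assert (0 < B ^ n) by nra.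
  assert (Hhalf : 2 ^ n * (1 / 2) ^ n = 1).
  { rewrite <- Rpow_mult_distr. replace (2 * (1 / 2)) with 1 by field. apply pow1. }
  split.
  - apply (Rle_div_r (c1 / (2 * (3 / 2) ^ n)) (1 - a ^ 2) (B ^ n)); [lra|].
    replace (c1 / (2 * (3 / 2) ^ n) * B ^ n) with (c1 * B ^ n / (2 * (3 / 2) ^ n))
      by (field; lra).
    apply Rle_div_l; [lra|].
    assert (c1 * B ^ n <= c1 * ((3 / 2) ^ n * d ^ n)) by (apply Rmult_le_compat_l; lra).
    nra.
  - apply (Rle_div_l (1 - a ^ 2) (2 * c2 * 2 ^ n) (B ^ n)); [lra|].
    assert (0 <= c2 * d ^ n) by lra.
    assert (2 * c2 * 2 ^ n * ((1 / 2) ^ n * d ^ n) = 2 * (c2 * d ^ n))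
      by (transitivity (2 * (c2 * d ^ n) * (2 ^ n * (1 / 2) ^ n)); [ring|rewrite Hhalf; ring]).
    assert (0 <= 2 * c2 * 2 ^ n) by (assert (0 < 2 ^ n) by (apply pow_lt; lra); nra).
    assert (2 * c2 * 2 ^ n * ((1 / 2) ^ n * d ^ n) <= 2 * c2 * 2 ^ n * B ^ n)
      by (apply Rmult_le_compat_l; lra).
    lra.
Qed.

Lemma half_bound_of_pow_bound (n : nat) c k d ds t : (2 <= n)%nat ->
  0 <= d <= ds -> ds <= 1 -> 0 < k -> 0 <= c ->
  k * t <= c * d ^ n -> 2 * c * ds <= k -> t <= d / 2.
Proof.
  intros Hn Hd Hds1 Hk Hc Ht Hck.
  assert (Hdn : d ^ n <= ds * d).
  { replace n with (2 + (n - 2))%nat by lia. rewrite pow_add.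
    assert (d ^ (n - 2) <= 1) by (rewrite <- (pow1 (n - 2)); apply pow_incr; lra).
    assert (0 <= d ^ 2) by (apply pow_le; lra).
    assert (d ^ 2 <= ds * d) by (simpl; nra). nra. }
  assert (c * d ^ n <= c * (ds * d)) by (apply Rmult_le_compat_l; lra).
  assert (2 * c * ds * d <= k * d) by (apply Rmult_le_compat_r; lra).
  nra.
Qed.

(* [v = u / |u|] is the radial projection of [u] on the circle. *)
Lemma radial_projection (zeta u : C) : Cmod zeta = 1 -> 1 / 2 <= Cmod u < 1 ->
  exists v t, t = / Cmod u - 1 /\ 0 < t /\ Cmod v = 1 /\ rho u = (RtoC (1 + t) * v)%C /\
    Cmod (v - zeta) <= 2 * Cmod (u - zeta) /\ Cmod (rho u - zeta) <= 2 * Cmod (u - zeta) /\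
    Cmod (v - zeta) - t <= Cmod (zeta - u) <= Cmod (v - zeta) + t.
Proof.
  intros Hz Hu. set (a := Cmod u) in *.
  assert (Hu0 : u <> RtoC 0) by (apply Cmod_pos_neq0; fold a; lra).
  exists (RtoC (/ a) * u)%C, (/ a - 1).
  assert (Ht : 1 - a <= / a - 1).
  { apply (Rmult_le_reg_r a); [lra|]. replace ((/ a - 1) * a) with (1 - a) by (field; lra). nra. }
  assert (Hv1 : Cmod (RtoC (/ a) * u) = 1).
  { rewrite Cmod_mult, Cmod_RtoC by (left; apply Rinv_0_lt_compat; lra). fold a. field. lra. }
  assert (Huv : Cmod (u - RtoC (/ a) * u) = 1 - a).
  { replace (u - RtoC (/ a) * u)%C with (- (RtoC (1 - a) * (RtoC (/ a) * u)))%C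
      by (apply injective_projections; simpl; field; lra).
    rewrite Cmod_opp. apply Cmod_scal_unit; [lra|exact Hv1]. }
  assert (Hua : 1 - a <= Cmod (u - zeta)).
  { pose proof (Cmod_reverse_triangle zeta u) as HR.
    rewrite Cmod_sub_sym in HR. fold a in HR. lra. }
  split; [reflexivity|]. split.
  { assert (1 < / a) by (rewrite <- Rinv_1; apply Rinv_lt_contravar; lra). lra. }
  split; [exact Hv1|]. split.
  { rewrite rho_polar by exact Hu0. fold a.
    apply injective_projections; simpl; field; lra. }
  split.
  { pose proof (Cmod_sub_triangle (RtoC (/ a) * u) u zeta) as T.
    rewrite (Cmod_sub_sym _ u), Huv in T. lra. }
  split.
  { rewrite <- (rho_unit zeta Hz) at 1. rewrite rho_dist, Hz, Rmult_1_r by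
      (assumption || (apply Cmod_pos_neq0; lra)). fold a.
    apply Rle_div_l; [lra|].
    pose proof (Cmod_ge_0 (u - zeta)). nra. }
  pose proof (Cmod_sub_triangle zeta (RtoC (/ a) * u) u) as T1.
  pose proof (Cmod_sub_triangle zeta u (RtoC (/ a) * u)) as T2.
  rewrite (Cmod_sub_sym (RtoC (/ a) * u) u), Huv in T1. rewrite Huv in T2.
  rewrite (Cmod_sub_sym zeta (RtoC (/ a) * u)) in T1, T2. lra.
Qed.

(* Second-order expansion of [|P + x|^2 = 1] for a displacement [x = t y + e]
   whose main part [t y] points into the direction [Re (conj P y) > 0]. *)
Lemma unit_defect_bounds (P y e : C) (t eps c L : R) :
  Cmod (P + (RtoC t * y + e)) = 1 -> 0 <= t <= 1 -> Cmod P <= 2 -> Cmod y = L ->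
  Cmod e <= eps * t -> eps <= c / 8 -> eps <= L -> 3 * c / 4 <= Re (Cconj P * y) ->
  t * c <= 1 - Cmod P ^ 2 <= (8 * L + 4 * L ^ 2) * t.
Proof.
  intros Hw1 Ht HP Hy He Hec HeL HRe. set (x := (RtoC t * y + e)%C) in *.
  assert (Hxm : Cmod x <= 2 * L * t).
  { unfold x. eapply Rle_trans; [apply Cmod_triangle|].
    rewrite Cmod_mult, Cmod_RtoC, Hy by lra.
    assert (eps * t <= L * t) by (apply Rmult_le_compat_r; lra). lra. }
  assert (Hexp : 1 = Cmod P ^ 2 + 2 * Re (Cconj P * x) + Cmod x ^ 2)
    by (rewrite <- Cmod_sq_add, Hw1; ring).
  assert (HRe_e : Rabs (Re (Cconj P * e)) <= 2 * (eps * t)).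
  { eapply Rle_trans; [apply re_le_Cmod|]. rewrite Cmod_mult, Cmod_conj.
    apply Rmult_le_compat; try apply Cmod_ge_0; lra. }
  pose proof (Rle_abs (Re (Cconj P * e))). pose proof (Rle_abs (- Re (Cconj P * e))).
  rewrite Rabs_Ropp in *.
  assert (Hsplit : Re (Cconj P * x) = t * Re (Cconj P * y) + Re (Cconj P * e)).
  { unfold x. replace (Cconj P * (RtoC t * y + e))%C
      with (RtoC t * (Cconj P * y) + Cconj P * e)%C by ring.
    now rewrite re_plus, re_scal_l. }
  pose proof (pow2_ge_0 (Cmod x)). split.
  - assert (t * (3 * c / 4) <= t * Re (Cconj P * y)) by (apply Rmult_le_compat_l; lra).
    nra.
  - pose proof (Re_Cmod_bounds (Cconj P * x)) as [_ HRx].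
    rewrite Cmod_mult, Cmod_conj in HRx.
    assert (Cmod P * Cmod x <= 2 * (2 * L * t))
      by (apply Rmult_le_compat; try apply Cmod_ge_0; lra).
    assert (Cmod x ^ 2 <= (2 * L * t) ^ 2)
      by (apply pow_incr; split; [apply Cmod_ge_0|lra]).
    assert ((2 * L * t) ^ 2 <= 4 * L ^ 2 * t)
      by (replace ((2 * L * t) ^ 2) with (4 * L ^ 2 * (t * t)) by ring;
          apply Rmult_le_compat_l; nra).
    nra.
Qed.

(** * Contact estimates *)

Definition contact_bounds (f : C -> C) (zeta : C) (c del m M : R) : Prop :=
  forall w, Cmod w = 1 -> 0 < Cmod (w - zeta) < del ->
    f w <> f zeta /\ m <= (1 - Cmod (f w) ^ 2) / Rpower (Cmod (f zeta - f w)) c <= M.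

Section Contact.

Variables (phi : C -> C) (zeta D : C) (n : nat) (del0 m0 M0 : R).
Hypothesis zeta_unit : Cmod zeta = 1.
Hypothesis lam_unit : Cmod (phi zeta) = 1.
Hypothesis self_map : forall z, Cmod z < 1 -> Cmod (phi z) < 1.
Hypothesis del0_pos : 0 < del0.
Hypothesis m0_pos : 0 < m0.
Hypothesis contact : contact_bounds phi zeta (INR n) del0 m0 M0.
Hypothesis strict : is_strict_derive phi zeta D.

Local Notation K := (Cmod D).
Local Notation k := (Cconj (phi zeta) * D * zeta)%C.
Local Notation kr := (Re k).

Lemma circle_image_in_disc w :
  Cmod w = 1 -> 0 < Cmod (w - zeta) < del0 -> Cmod (phi w) < 1.
Proof.
  intros Hw Hd. destruct (contact w Hw Hd) as [_ [Hm _]].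
  assert (HY : 0 < Rpower (Cmod (phi zeta - phi w)) (INR n)) by apply exp_pos.
  apply Rle_div_r in Hm; [|exact HY].
  pose proof (Rmult_lt_0_compat _ _ m0_pos HY). pose proof (Cmod_ge_0 (phi w)). nra.
Qed.

Lemma phi_sq_lower eps : 0 < eps -> exists d, 0 < d /\ forall a, Cmod (a - zeta) < d ->
  1 + 2 * Re (Cconj (phi zeta) * D * (a - zeta)) - 2 * (eps * Cmod (a - zeta))
  <= Cmod (phi a) ^ 2.
Proof.
  intros He. destruct (strict eps He) as [d [Hd H]]. exists d. split; [exact Hd|].
  intros a Ha. rewrite <- (Cmod_sub_self zeta) in Hd. specialize (H a zeta Ha Hd).
  pose proof (Cmod_sq_unit_add_lower (phi zeta) (D * (a - zeta))
    (phi a - phi zeta - D * (a - zeta)) lam_unit) as Hsq.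
  replace (phi zeta + D * (a - zeta) + (phi a - phi zeta - D * (a - zeta)))%C with (phi a)
    in Hsq by ring.
  replace (Cconj (phi zeta) * (D * (a - zeta)))%C with (Cconj (phi zeta) * D * (a - zeta))%C
    in Hsq by ring.
  lra.
Qed.

(* With exponent 0 the contact condition keeps [1 - |phi w|^2] away from 0,
   contradicting the continuity of [phi] at [zeta]. *)
Lemma contact_order_nonzero : n <> 0%nat.
Proof.
  intros Hn0. destruct (strict 1 ltac:(lra)) as [d1 [Hd1 H1]].
  assert (0 <= K) by apply Cmod_ge_0.
  destruct (ex_pos_le (Rmin d1 del0 / 4) (m0 / (16 * (K + 1)))) as [s [Hs [Hs1 Hs2]]].
  { pose proof (Rmin_pos _ _ Hd1 del0_pos). lra. }
  { apply Rdiv_lt_0_compat; lra. }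
  pose proof (Rmin_l d1 del0). pose proof (Rmin_r d1 del0).
  destruct (circle_point_near zeta s zeta_unit ltac:(lra)) as [Hw1 Hwd].
  set (w := (zeta * circle_point s)%C) in *. rewrite Rabs_right in Hwd by lra.
  destruct (contact w Hw1 ltac:(lra)) as [_ [Hlo _]].
  rewrite Hn0 in Hlo. unfold Rpower in Hlo. simpl INR in Hlo.
  rewrite Rmult_0_l, exp_0, Rdiv_1_r in Hlo.
  rewrite <- (Cmod_sub_self zeta) in Hd1. specialize (H1 w zeta ltac:(lra) Hd1).
  replace (w - zeta - (zeta - zeta))%C with (w - zeta)%C in H1 by ring.
  assert (Hpl : Cmod (phi w - phi zeta) <= (K + 1) * (2 * s)).
  { replace (phi w - phi zeta)%C with (D * (w - zeta) + (phi w - phi zeta - D * (w - zeta)))%C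
      by ring.
    eapply Rle_trans; [apply Cmod_triangle|]. rewrite Cmod_mult.
    assert ((K + 1) * Cmod (w - zeta) <= (K + 1) * (2 * s)) by (apply Rmult_le_compat_l; lra).
    lra. }
  pose proof (Cmod_reverse_triangle (phi zeta) (phi w)) as HR. rewrite Cmod_sub_sym in HR.
  pose proof (circle_image_in_disc w Hw1 ltac:(lra)). pose proof (Cmod_ge_0 (phi w)).
  assert ((K + 1) * (2 * s) <= m0 / 8).
  { assert (s * (16 * (K + 1)) <= m0) by (apply Rle_div_r; lra). lra. }
  assert (1 - Cmod (phi w) <= m0 / 8) by lra.
  assert ((1 - Cmod (phi w)) * (1 + Cmod (phi w)) <= m0 / 8 * 2)
    by (apply Rmult_le_compat; lra).
  nra.
Qed.

(* Along the radius, [|phi|^2 = 1 - 2 s Re k + o(s)], which exceeds [1] if [Re k < 0]. *)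
Lemma Re_angular_derivative_nonneg : 0 <= Re k.
Proof.
  destruct (Rle_or_lt 0 (Re k)) as [|Hneg]; [assumption|]. exfalso.
  destruct (phi_sq_lower (- Re k / 2)) as [d [Hd Hsq]]; [lra|].
  destruct (ex_pos_le (d / 2) (1 / 2)) as [s [Hs [Hsd Hs1]]]; [lra|lra|].
  set (a := (RtoC (1 - s) * zeta)%C).
  assert (Haz : (a - zeta)%C = (RtoC (- s) * zeta)%C).
  { unfold a. apply injective_projections; simpl; ring. }
  assert (Ha : Cmod (a - zeta) = s).
  { rewrite Haz, Cmod_mult, zeta_unit, Cmod_R, Rabs_Ropp. rewrite Rabs_right; lra. }
  assert (Ha1 : Cmod a < 1).
  { unfold a. rewrite Cmod_mult, zeta_unit, Cmod_RtoC; lra. }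
  specialize (Hsq a ltac:(lra)). rewrite Ha in Hsq.
  replace (Cconj (phi zeta) * D * (a - zeta))%C with (RtoC (- s) * k)%C in Hsq
    by (rewrite Haz; ring).
  rewrite re_scal_l in Hsq.
  pose proof (self_map a Ha1). pose proof (Cmod_ge_0 (phi a)).
  assert (Cmod (phi a) ^ 2 < 1) by nra. nra.
Qed.

(* Along the circle, [|phi|^2 = 1 - 4 s Im k + o(s)] when [Re k = 0], which exceeds
   [1] on one side of [zeta] unless [Im k = 0]. *)
Lemma Im_angular_derivative_eq0 : Re k = 0 -> Im k = 0.
Proof.
  intros Hre. set (b := Im k).
  destruct (Req_dec b 0) as [|Hb]; [assumption|]. exfalso.
  destruct (phi_sq_lower (Rabs b / 4)) as [d [Hd Hsq]].
  { apply Rdiv_lt_0_compat; [apply Rabs_pos_lt|]; lra. }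
  destruct (ex_pos_le (Rmin d del0 / 4) 1) as [s0 [Hs0 [Hs0d Hs01]]];
    [pose proof (Rmin_pos _ _ Hd del0_pos); lra|lra|].
  pose proof (Rmin_l d del0). pose proof (Rmin_r d del0).
  set (s := if Rlt_dec 0 b then - s0 else s0).
  assert (Hsb : - b * s = Rabs b * s0 /\ Rabs s = s0 /\ s <> 0).
  { unfold s. destruct (Rlt_dec 0 b).
    - rewrite Rabs_right, Rabs_Ropp, Rabs_right by lra. split; [ring|lra].
    - rewrite Rabs_left, Rabs_right by lra. split; [ring|lra]. }
  destruct Hsb as [Hsb [Hss Hsn]].
  destruct (circle_point_near zeta s zeta_unit Hsn) as [Hw1 Hwd]. rewrite Hss in Hwd.
  set (w := (zeta * circle_point s)%C) in *.
  specialize (Hsq w ltac:(lra)).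
  replace (Cconj (phi zeta) * D * (w - zeta))%C with (k * (circle_point s - 1))%C in Hsq
    by (unfold w; ring).
  rewrite re_mult, Hre, Im_circle_point_sub1 in Hsq. fold b in Hsq.
  assert (Hss2 : s * s = s0 * s0) by (rewrite <- Hss, <- Rabs_mult, Rabs_right; nra).
  assert (Hmain : Rabs b * s0 <= - (b * (2 * s / (1 + s * s)))).
  { replace (- (b * (2 * s / (1 + s * s)))) with (2 * (- b * s) / (1 + s * s))
      by (field; nra).
    rewrite Hsb, Hss2.
    apply (Rle_div_r (Rabs b * s0) (2 * (Rabs b * s0)) (1 + s0 * s0)); [nra|].
    assert (0 <= Rabs b * s0) by (pose proof (Rabs_pos b); nra).
    assert (s0 * s0 <= 1) by nra. nra. }
  pose proof (circle_image_in_disc w Hw1 ltac:(lra)). pose proof (Cmod_ge_0 (phi w)).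
  assert (Cmod (phi w) ^ 2 < 1) by nra.
  assert (Rabs b / 4 * Cmod (w - zeta) <= Rabs b / 4 * (2 * s0))
    by (apply Rmult_le_compat_l; pose proof (Rabs_pos b); lra).
  assert (0 < Rabs b * s0) by (apply Rmult_lt_0_compat; [apply Rabs_pos_lt|]; lra).
  nra.
Qed.

Lemma angular_derivative_pos : D <> RtoC 0 -> 0 < kr.
Proof.
  intros HD. destruct (Rle_lt_or_eq_dec _ _ Re_angular_derivative_nonneg) as [|Hre];
    [assumption|]. exfalso.
  assert (Hk0 : k <> RtoC 0).
  { apply Cmult_neq_0; [apply Cmult_neq_0; [apply Cconj_neq0|exact HD]|];
      apply Cmod_pos_neq0; lra. }
  apply Hk0. symmetry in Hre. pose proof (Im_angular_derivative_eq0 Hre) as Him.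
  clear -Hre Him. destruct k as [x y]. unfold Re, Im in *. simpl in *. now subst.
Qed.

Lemma reflected_in_disc u :
  Cmod (u - zeta) < del0 -> u <> zeta -> phi (rho u) <> RtoC 0 ->
  Cmod (rho (phi (rho u))) <= 1 -> Cmod u < 1.
Proof.
  intros Hu Hne Hp0 Hw. destruct (Rlt_or_le (Cmod u) 1) as [|Hu1]; [assumption|]. exfalso.
  assert (Hu0 : u <> RtoC 0) by (apply Cmod_pos_neq0; lra).
  assert (Hpr : Cmod (phi (rho u)) < 1).
  { destruct (Req_dec (Cmod u) 1) as [E|E].
    - rewrite (rho_unit u E). apply circle_image_in_disc; [exact E|]. split; [|exact Hu].
      apply Cmod_gt_0. intro E2. apply Hne.
      replace u with (u - zeta + zeta)%C by ring. rewrite E2. ring.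
    - apply self_map. rewrite Cmod_rho. rewrite <- Rinv_1. apply Rinv_lt_contravar; lra. }
  rewrite Cmod_rho in Hw. pose proof (proj1 (Cmod_gt_0 _) Hp0).
  assert (1 < / Cmod (phi (rho u))) by (rewrite <- Rinv_1; apply Rinv_lt_contravar; lra).
  lra.
Qed.

(* [eps] bounds the linearisation error of [phi] on the disc of radius [ds]
   about [zeta], and both are small compared to the derivative data [K], [kr]. *)
Definition admissible (eps ds : R) : Prop :=
  0 < eps /\ eps <= kr / 8 /\ eps <= K / 2 /\
  0 < ds /\ ds <= 1 /\ ds <= del0 /\ 2 * K * ds <= 1 /\
  K * (2 * K + 1) * ds <= kr / 4 /\ 2 * M0 * (2 * K) ^ n * ds <= kr /\
  forall a b, Cmod (a - zeta) < ds -> Cmod (b - zeta) < ds ->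
    Cmod (phi a - phi b - D * (a - b)) <= eps * Cmod (a - b).

Section Scales.

Variables eps ds : R.
Hypothesis scales : admissible eps ds.

Lemma image_dist_scale v : Cmod (v - zeta) < ds ->
  K * Cmod (v - zeta) / 2 <= Cmod (phi zeta - phi v) <= 2 * K * Cmod (v - zeta).
Proof.
  intros Hv. destruct scales as (_ & _ & HeK & Hds & _ & _ & _ & _ & _ & Hlin).
  rewrite <- (Cmod_sub_self zeta) in Hds. specialize (Hlin v zeta Hv Hds).
  rewrite (Cmod_sub_sym (phi zeta)).
  replace (phi v - phi zeta)%C with (D * (v - zeta) + (phi v - phi zeta - D * (v - zeta)))%C
    by ring.
  pose proof (Cmod_perturb (D * (v - zeta)) (phi v - phi zeta - D * (v - zeta))) as HP.
  rewrite Cmod_mult in HP.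
  replace (2 * K * Cmod (v - zeta)) with (2 * (K * Cmod (v - zeta))) by ring. apply HP.
  assert (eps * Cmod (v - zeta) <= K / 2 * Cmod (v - zeta))
    by (apply Rmult_le_compat_r; [apply Cmod_ge_0|lra]).
  lra.
Qed.

Lemma Re_derivative_near v : Cmod v = 1 -> Cmod (v - zeta) < ds ->
  3 * kr / 4 <= Re (Cconj (phi v) * D * v).
Proof.
  intros Hv1 Hv. destruct scales as (_ & _ & _ & Hds & _ & _ & _ & Hkr & _).
  pose proof (image_dist_scale v Hv) as [_ Hrho]. rewrite (Cmod_sub_sym (phi zeta)) in Hrho.
  assert (Hdiff : Cmod (Cconj (phi v) * D * v - Cconj (phi zeta) * D * zeta) <= kr / 4).
  { replace (Cconj (phi v) * D * v - Cconj (phi zeta) * D * zeta)%C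
      with (D * (Cconj (phi v - phi zeta) * v + Cconj (phi zeta) * (v - zeta)))%C
      by (rewrite Cminus_conj; ring).
    rewrite Cmod_mult. eapply Rle_trans;
      [apply Rmult_le_compat_l; [apply Cmod_ge_0|apply Cmod_triangle]|].
    rewrite !Cmod_mult, !Cmod_conj, Hv1, lam_unit.
    assert (K * (Cmod (phi v - phi zeta) * 1 + 1 * Cmod (v - zeta))
            <= K * (2 * K + 1) * Cmod (v - zeta))
      by (rewrite Rmult_assoc; apply Rmult_le_compat_l; [apply Cmod_ge_0|lra]).
    assert (K * (2 * K + 1) * Cmod (v - zeta) <= K * (2 * K + 1) * ds)
      by (apply Rmult_le_compat_l; [pose proof (Cmod_ge_0 D); nra|lra]).
    lra. }
  replace (Cconj (phi v) * D * v)%C with (Cconj (phi zeta) * D * zeta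
    + (Cconj (phi v) * D * v - Cconj (phi zeta) * D * zeta))%C by ring.
  rewrite re_plus. pose proof (Re_Cmod_bounds
    (Cconj (phi v) * D * v - Cconj (phi zeta) * D * zeta)). lra.
Qed.

(* Pushing a boundary point [v] radially out by [t] until [phi] reaches the unit
   circle, the defect [1 - |phi v|^2] is of order [t], since [phi] moves by about
   [t D v] and [Re (conj (phi v) D v)] is close to [kr > 0]. *)
Lemma defect_scale v t : Cmod v = 1 -> 0 <= t ->
  Cmod (v - zeta) < ds -> Cmod (RtoC (1 + t) * v - zeta) < ds ->
  Cmod (phi (RtoC (1 + t) * v)) = 1 ->
  t * kr <= 1 - Cmod (phi v) ^ 2 <= (8 * K + 4 * K ^ 2) * t.
Proof.
  intros Hv1 Ht Hv Hw Hw1.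
  destruct scales as (Heps & Hekr & HeK & Hds & Hds1 & _ & HdsK & _ & _ & Hlin).
  assert (Ht1 : t <= 1).
  { pose proof (Cmod_reverse_triangle (RtoC (1 + t) * v) zeta) as HR.
    rewrite Cmod_scal_unit, zeta_unit in HR by lra. lra. }
  set (e := (phi (RtoC (1 + t) * v) - phi v - RtoC t * (D * v))%C).
  apply (unit_defect_bounds (phi v) (D * v) e t eps).
  - replace (phi v + (RtoC t * (D * v) + e))%C with (phi (RtoC (1 + t) * v))
      by (unfold e; ring). exact Hw1.
  - lra.
  - pose proof (image_dist_scale v Hv) as [_ Hrho].
    pose proof (Cmod_reverse_triangle (phi v) (phi zeta)) as HR.
    rewrite (Cmod_sub_sym (phi v)) in HR.
    assert (2 * K * Cmod (v - zeta) <= 2 * K * ds)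
      by (apply Rmult_le_compat_l; [pose proof (Cmod_ge_0 D)|]; lra).
    lra.
  - now rewrite Cmod_mult, Hv1, Rmult_1_r.
  - specialize (Hlin _ _ Hw Hv).
    replace (RtoC (1 + t) * v - v)%C with (RtoC t * v)%C in Hlin
      by (apply injective_projections; simpl; ring).
    rewrite Cmod_scal_unit in Hlin by assumption.
    replace e with (phi (RtoC (1 + t) * v) - phi v - D * (RtoC t * v))%C by (unfold e; ring).
    exact Hlin.
  - lra.
  - lra.
  - rewrite Cmult_assoc. now apply Re_derivative_near.
Qed.

(* Comparing the defect with the contact condition at [v], where
   [|phi zeta - phi v|] is of order [|v - zeta|], shows that [t] is of order
   [|v - zeta|^n]. *)
Lemma contact_scale v t : Cmod v = 1 -> 0 < t ->
  Cmod (v - zeta) < ds -> Cmod (RtoC (1 + t) * v - zeta) < ds ->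
  Cmod (phi (RtoC (1 + t) * v)) = 1 ->
  0 < Cmod (v - zeta) /\
  m0 * (K / 2) ^ n * Cmod (v - zeta) ^ n <= (8 * K + 4 * K ^ 2) * t /\
  kr * t <= M0 * (2 * K) ^ n * Cmod (v - zeta) ^ n.
Proof.
  intros Hv1 Ht Hv Hw Hw1.
  pose proof scales as (Heps & Hekr & HeK & Hds & _ & Hdel & _).
  destruct (defect_scale v t Hv1 ltac:(lra) Hv Hw Hw1) as [Hlo Hhi].
  set (d := Cmod (v - zeta)) in *.
  assert (Hkt : 0 < t * kr) by (apply Rmult_lt_0_compat; lra).
  assert (Hd : 0 < d).
  { destruct (Rle_lt_or_eq_dec 0 d (Cmod_ge_0 _)) as [|E]; [assumption|]. exfalso.
    assert (v = zeta).
    { symmetry in E. apply Cmod_eq_0 in E.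
      replace v with ((v - zeta) + zeta)%C by ring. rewrite E. ring. }
    subst v. rewrite lam_unit in Hlo. lra. }
  split; [exact Hd|].
  destruct (contact v Hv1 ltac:(fold d; lra)) as [_ [Hm HM]].
  pose proof (image_dist_scale v Hv) as Hrho. fold d in Hrho.
  set (r := Cmod (phi zeta - phi v)) in *.
  assert (Hr0 : 0 < r).
  { assert (0 < K * d / 2) by (apply Rdiv_lt_0_compat; [apply Rmult_lt_0_compat|]; lra).
    lra. }
  rewrite Rpower_pow in Hm, HM by exact Hr0.
  assert (0 < r ^ n) by (apply pow_lt; lra).
  apply Rle_div_r in Hm; [|lra]. apply Rle_div_l in HM; [|lra].
  assert (Hrn : (K / 2) ^ n * d ^ n <= r ^ n <= (2 * K) ^ n * d ^ n).
  { rewrite <- !Rpow_mult_distr.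
    split; apply pow_incr; split; try lra; apply Rmult_le_pos; lra. }
  split.
  - assert (m0 * ((K / 2) ^ n * d ^ n) <= m0 * r ^ n) by (apply Rmult_le_compat_l; lra).
    nra.
  - assert (M0 * r ^ n <= M0 * ((2 * K) ^ n * d ^ n)).
    { apply Rmult_le_compat_l; [|lra].
      assert (0 < m0 * r ^ n) by (apply Rmult_lt_0_compat; lra).
      assert (0 <= M0 * r ^ n) by lra.
      apply (Rmult_le_reg_r (r ^ n)); lra. }
    nra.
Qed.

End Scales.

Lemma admissible_exists : D <> RtoC 0 -> 0 < M0 -> exists eps ds, admissible eps ds.
Proof.
  intros HD HM0. pose proof (angular_derivative_pos HD) as Hkr.
  assert (HK : 0 < K) by now apply Cmod_gt_0.
  destruct (ex_pos_le (kr / 8) (K / 2)) as [eps (Heps & He1 & He2)]; [lra|lra|].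
  destruct (strict eps Heps) as [d1 [Hd1 Hlin]].
  set (c := 2 * M0 * (2 * K) ^ n).
  assert (Hc : 0 < c) by (unfold c; pose proof (pow_lt (2 * K) n ltac:(lra)); nra).
  assert (HK1 : 0 < K * (2 * K + 1)) by nra.
  destruct (ex_pos_le d1 1) as [c1 (Hc1 & Hc1a & Hc1b)]; [lra|lra|].
  destruct (ex_pos_le c1 del0) as [c2 (Hc2 & Hc2a & Hc2b)]; [lra|lra|].
  destruct (ex_pos_le c2 (1 / (2 * K))) as [c3 (Hc3 & Hc3a & Hc3b)];
    [lra|apply Rdiv_lt_0_compat; lra|].
  destruct (ex_pos_le c3 (kr / 4 / (K * (2 * K + 1)))) as [c4 (Hc4 & Hc4a & Hc4b)];
    [lra|apply Rdiv_lt_0_compat; lra|].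
  destruct (ex_pos_le c4 (kr / c)) as [ds (Hds & Hdsa & Hdsb)];
    [lra|apply Rdiv_lt_0_compat; lra|].
  apply Rle_div_r in Hc3b; [|lra]. apply Rle_div_r in Hc4b; [|lra].
  apply Rle_div_r in Hdsb; [|lra].
  exists eps, ds. unfold admissible. fold c.
  repeat split; try lra.
  - assert (ds * (2 * K) <= c3 * (2 * K)) by (apply Rmult_le_compat_r; lra). lra.
  - assert (ds * (K * (2 * K + 1)) <= c4 * (K * (2 * K + 1)))
      by (apply Rmult_le_compat_r; lra). lra.
  - intros a b Ha Hb. apply Hlin; lra.
Qed.

(* [u] is compared with its radial projection [v] on the circle, where
   [contact_scale] applies to [phi]. *)
Lemma reflected_contact : D <> RtoC 0 -> (2 <= n)%nat -> 0 < M0 ->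
  exists eta m M, 0 < eta /\ 0 < m /\ 0 < M /\ forall u,
    Cmod (u - zeta) < eta -> u <> zeta -> Cmod (phi (rho u)) = 1 ->
    m <= (1 - Cmod u ^ 2) / Cmod (zeta - u) ^ n <= M.
Proof.
  intros HD Hn HM0. destruct (admissible_exists HD HM0) as [eps [ds Hs]].
  pose proof Hs as (Heps & Hekr & HeK & Hds & Hds1 & Hdel & _ & _ & Hdsc & _).
  set (C1 := 8 * K + 4 * K ^ 2).
  set (c1 := m0 * (K / 2) ^ n / C1). set (c2 := M0 * (2 * K) ^ n / kr).
  assert (HK : 0 < K) by lra. assert (HC1 : 0 < C1) by (unfold C1; nra).
  assert (Hc1 : 0 < c1).
  { unfold c1. apply Rdiv_lt_0_compat; [apply Rmult_lt_0_compat, pow_lt|]; lra. }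
  assert (Hc2 : 0 < c2).
  { unfold c2. apply Rdiv_lt_0_compat; [apply Rmult_lt_0_compat, pow_lt|]; lra. }
  exists (ds / 2), (c1 / (2 * (3 / 2) ^ n)), (2 * c2 * 2 ^ n).
  split; [lra|]. split; [apply Rdiv_lt_0_compat; [|pose proof (pow_lt (3 / 2) n)]; lra|].
  split; [pose proof (pow_lt 2 n); nra|].
  intros u Hu Hne Hw1.
  assert (Hu1 : 1 / 2 <= Cmod u < 1).
  { split.
    - pose proof (Cmod_reverse_triangle zeta u) as HR. rewrite Cmod_sub_sym in HR. lra.
    - apply reflected_in_disc; [lra|exact Hne|apply Cmod_pos_neq0; lra|].
      rewrite Cmod_rho, Hw1, Rinv_1. lra. }
  destruct (radial_projection zeta u zeta_unit Hu1)
    as (v & t & Ht & Ht0 & Hv1 & Hrho & Hvz & Hrz & HB).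
  rewrite Hrho in Hrz, Hw1.
  destruct (contact_scale eps ds Hs v t Hv1 Ht0 ltac:(lra) ltac:(lra) Hw1)
    as (Hd & Hlo & Hhi).
  set (d := Cmod (v - zeta)) in *.
  assert (Htd : t <= d / 2).
  { apply (half_bound_of_pow_bound n (M0 * (2 * K) ^ n) kr d ds t Hn);
      try lra; pose proof (pow_lt (2 * K) n); nra. }
  apply (ratio_of_scales n (Cmod u) t d); try lra.
  split.
  - replace (c1 * d ^ n) with (m0 * (K / 2) ^ n * d ^ n / C1) by (unfold c1; field; lra).
    apply Rle_div_l; [lra|]. fold C1 in Hlo. lra.
  - replace (c2 * d ^ n) with (M0 * (2 * K) ^ n * d ^ n / kr) by (unfold c2; field; lra).
    apply Rle_div_r; [lra|]. lra.
Qed.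

Section Branch.

Variables (sigma : C -> C) (r1 : R).
Hypothesis sigma_lam : sigma (phi zeta) = zeta.
Hypothesis r1_pos : 0 < r1.
Hypothesis sigma_holo : forall w, Cmod (w - phi zeta) < r1 -> holo_at sigma w.
Hypothesis sigma_inv : forall w, Cmod (w - phi zeta) < r1 -> rho (phi (rho (sigma w))) = w.

Lemma phi_rho_sigma w : Cmod (w - phi zeta) < r1 -> phi (rho (sigma w)) = rho w.
Proof. intros Hw. rewrite <- (sigma_inv w Hw) at 2. symmetry. apply rho_involutive. Qed.

Lemma sigma_lipschitz : exists L d, 0 < L /\ 0 < d /\ forall w,
  Cmod (w - phi zeta) < d -> Cmod (sigma w - zeta) <= L * Cmod (w - phi zeta).
Proof.
  destruct (holo_at_lipschitz sigma (phi zeta)) as (L & d & HL & Hd & Hlip).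
  { apply sigma_holo. rewrite Cmod_sub_self. exact r1_pos. }
  rewrite sigma_lam in Hlip. now exists L, d.
Qed.

(* If [D = 0], [phi] would move [rho (sigma w)] by [o(|w - phi zeta|)], whereas
   [rho] moves points near the circle by about their distance. *)
Lemma branch_derivative_neq0 : D <> RtoC 0.
Proof.
  intros HD. destruct sigma_lipschitz as (L & d & HL & Hd & Hlip).
  destruct (strict (1 / (8 * L))) as [d1 [Hd1 Hlin]]; [apply Rdiv_lt_0_compat; lra|].
  destruct (ex_pos_le (Rmin d r1 / 2) (1 / 2)) as [s1 (Hs1 & Hs1a & Hs1b)];
    [pose proof (Rmin_pos _ _ Hd r1_pos); lra|lra|].
  destruct (ex_pos_le s1 (Rmin 1 d1 / (4 * L))) as [s (Hs & Hsa & Hsb)];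
    [lra|apply Rdiv_lt_0_compat; [apply Rmin_pos|]; lra|].
  pose proof (Rmin_l d r1). pose proof (Rmin_r d r1).
  pose proof (Rmin_l 1 d1). pose proof (Rmin_r 1 d1).
  apply Rle_div_r in Hsb; [|lra].
  set (w := (phi zeta + RtoC s)%C).
  assert (Hw : Cmod (w - phi zeta) = s).
  { unfold w. replace (phi zeta + s - phi zeta)%C with (RtoC s) by ring. apply Cmod_RtoC; lra. }
  assert (Hwm : 1 / 2 <= Cmod w <= 3 / 2).
  { pose proof (Cmod_reverse_triangle w (phi zeta)).
    pose proof (Cmod_reverse_triangle (phi zeta) w) as HR. rewrite Cmod_sub_sym in HR. lra. }
  set (u := sigma w).
  assert (Hu : Cmod (u - zeta) <= L * s) by (rewrite <- Hw; apply Hlip; lra).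
  assert (Hum : 3 / 4 <= Cmod u).
  { pose proof (Cmod_reverse_triangle zeta u) as HR. rewrite Cmod_sub_sym in HR. lra. }
  assert (Hv : Cmod (rho u - zeta) <= 2 * L * s).
  { rewrite <- (rho_unit zeta zeta_unit) at 1.
    rewrite rho_dist, zeta_unit, Rmult_1_r by (apply Cmod_pos_neq0; lra).
    apply Rle_div_l; [lra|]. pose proof (Cmod_ge_0 (u - zeta)). nra. }
  assert (Himg : Cmod (rho w - phi zeta) <= s / 4).
  { rewrite <- (phi_rho_sigma w) by lra. fold u.
    rewrite <- (Cmod_sub_self zeta) in Hd1.
    specialize (Hlin (rho u) zeta ltac:(nra) Hd1). rewrite HD in Hlin.
    replace (phi (rho u) - phi zeta - 0 * (rho u - zeta))%C with (phi (rho u) - phi zeta)%C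
      in Hlin by ring.
    assert (Hs4 : 1 / (8 * L) * Cmod (rho u - zeta) <= 1 / (8 * L) * (2 * L * s))
      by (apply Rmult_le_compat_l; [left; apply Rdiv_lt_0_compat|]; lra).
    replace (1 / (8 * L) * (2 * L * s)) with (s / 4) in Hs4 by (field; lra). lra. }
  rewrite <- (rho_unit (phi zeta) lam_unit) in Himg.
  rewrite rho_dist, Hw, lam_unit, Rmult_1_r in Himg by (apply Cmod_pos_neq0; lra).
  assert (s / (3 / 2) <= s / Cmod w)
    by (apply Rmult_le_compat_l; [lra|]; apply Rinv_le_contravar; lra).
  lra.
Qed.

Lemma sigma_neq_zeta w : Cmod (w - phi zeta) < r1 -> w <> phi zeta -> sigma w <> zeta.
Proof.
  intros Hw Hne E. apply Hne. rewrite <- (sigma_inv w Hw), E.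
  now rewrite (rho_unit zeta zeta_unit), (rho_unit (phi zeta) lam_unit).
Qed.

Lemma branch_continuous eps : 0 < eps -> exists del, 0 < del /\ forall z,
  Cmod (z - phi zeta) < del -> Cmod (sigma z - sigma (phi zeta)) < eps.
Proof.
  intros He. destruct sigma_lipschitz as (L & d & HL & Hd & Hlip).
  destruct (ex_pos_le d (eps / L)) as [del (Hdel & Hdel1 & Hdel2)];
    [lra|apply Rdiv_lt_0_compat; lra|].
  exists del. split; [exact Hdel|]. intros z Hz. rewrite sigma_lam.
  apply Rle_div_r in Hdel2; [|lra].
  pose proof (Hlip z ltac:(lra)). nra.
Qed.

Lemma branch_into_disc : exists r, 0 < r /\ forall z,
  Cmod (z - phi zeta) < r -> Cmod z < 1 -> holo_at sigma z /\ Cmod (sigma z) < 1.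
Proof.
  destruct sigma_lipschitz as (L & d & HL & Hd & Hlip).
  destruct (ex_pos_le (Rmin r1 d) (Rmin (1 / 2) (del0 / L))) as [r (Hr & Hr1 & Hr2)].
  { now apply Rmin_pos. }
  { apply Rmin_pos; [lra|apply Rdiv_lt_0_compat; lra]. }
  pose proof (Rmin_l r1 d). pose proof (Rmin_r r1 d).
  pose proof (Rmin_l (1 / 2) (del0 / L)) as Hr12.
  pose proof (Rmin_r (1 / 2) (del0 / L)) as HrL. apply Rle_div_r in HrL; [|lra].
  exists r. split; [exact Hr|]. intros z Hz Hz1. split; [apply sigma_holo; lra|].
  assert (Hzne : z <> phi zeta).
  { intros ->. lra. }
  assert (Hz0 : 1 / 2 <= Cmod z).
  { pose proof (Cmod_reverse_triangle (phi zeta) z) as HR. rewrite Cmod_sub_sym in HR. lra. }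
  apply reflected_in_disc.
  - pose proof (Hlip z ltac:(lra)). nra.
  - apply sigma_neq_zeta; [lra|exact Hzne].
  - intro E. pose proof (sigma_inv z ltac:(lra)) as Hinv.
    rewrite E, rho_0 in Hinv. rewrite <- Hinv, Cmod_0 in Hz0. lra.
  - rewrite sigma_inv by lra. lra.
Qed.

Lemma branch_contact : (2 <= n)%nat -> 0 < M0 ->
  exists del m M, 0 < del /\ 0 < m /\ 0 < M /\
    contact_bounds sigma (phi zeta) (INR n) del m M.
Proof.
  intros Hn HM0.
  destruct (reflected_contact branch_derivative_neq0 Hn HM0)
    as (eta & m & M & Heta & Hm & HM & Hratio).
  destruct sigma_lipschitz as (L & d & HL & Hd & Hlip).
  destruct (ex_pos_le (Rmin r1 d) (eta / L)) as [del (Hdel & Hdel1 & Hdel2)];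
    [now apply Rmin_pos|apply Rdiv_lt_0_compat; lra|].
  pose proof (Rmin_l r1 d). pose proof (Rmin_r r1 d).
  apply Rle_div_r in Hdel2; [|lra].
  exists del, m, M. split; [exact Hdel|]. split; [exact Hm|]. split; [exact HM|].
  intros w Hw1 Hw. rewrite sigma_lam.
  assert (Hne : sigma w <> zeta).
  { apply sigma_neq_zeta; [lra|]. intro E. rewrite E, Cmod_sub_self in Hw. lra. }
  split; [exact Hne|].
  rewrite Rpower_pow.
  2: { rewrite Cmod_sub_sym. apply Cmod_gt_0. intro E. apply Hne.
       replace (sigma w) with (sigma w - zeta + zeta)%C by ring. rewrite E. ring. }
  apply Hratio.
  - pose proof (Hlip w ltac:(lra)). nra.
  - exact Hne.
  - rewrite phi_rho_sigma by lra. now rewrite rho_unit.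
Qed.

Lemma branch_order_of_contact : Nat.Even n -> 0 < M0 ->
  OrderOfContact sigma (phi zeta) (INR n).
Proof.
  intros [j Hj] HM0. assert (Hn : (2 <= n)%nat) by (pose proof contact_order_nonzero; lia).
  unfold OrderOfContact. rewrite Cabs_eq, Csub_eq.
  split; [exact lam_unit|]. split; [exact branch_into_disc|]. split.
  { intros eps He. destruct (branch_continuous eps He) as [del [Hdel Hcont]].
    exists del. split; [exact Hdel|]. intros z _ Hz. exact (Hcont z Hz). }
  split; [rewrite sigma_lam; exact zeta_unit|].
  exact (branch_contact Hn HM0).
Qed.

End Branch.

End Contact.

Theorem mainTheorem10 (phi : Cx -> Cx) (zeta : Cx) (n : nat) (sigma : Cx -> Cx) :
  RationalSelfMap phi ->
  Nat.Even n ->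
  OrderOfContact phi zeta (INR n) ->
  BranchOfInverse (phi_e phi) sigma (phi zeta) zeta ->
  OrderOfContact sigma (phi zeta) (INR n).
Proof.
  intros (p & q & Hq & Hpq & Hself) Hev
    (Hz & _ & _ & Hl & del0 & m0 & M0 & Hdel0 & Hm0 & HM0 & Hcontact) (Hs & r1 & Hr1 & Hbr).
  rewrite Cabs_eq in *. rewrite Csub_eq, Cdiv_eq in *.
  destruct (rational_strict_derive p q phi zeta) as [D HD]; [apply Hq; lra|exact Hpq|].
  exact (branch_order_of_contact phi zeta D n del0 m0 M0 Hz Hl Hself Hdel0 Hm0 Hcontact HD
    sigma r1 Hs Hr1 (fun w Hw => proj1 (Hbr w Hw)) (fun w Hw => proj2 (Hbr w Hw)) Hev HM0).
Qed.
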